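(* Let $\mathcal T$ be an orbital category and $\mathcal C$ a $\mathcal T$-weak indexing system. Then $\mathcal C$ is almost essentially unital if and only if, whenever $S\in\mathcal C_V$ is not isomorphic to $*_V$, we have $V\in\upsilon(\mathcal C)$.
   Context: For a small category $\mathcal T$, $\mathbb F_{\mathcal T}$ is the full subcategory of $\mathrm{Fun}(\mathcal T^{op},\mathrm{Set})$ on finite coproducts of representables; $\mathcal T$ is orbital if $\mathbb F_{\mathcal T}$ has pullbacks. $\mathbb F_V:=\mathbb F_{\mathcal T,/V}$, $*_V$ terminal, $\emptyset_V$ initial; for $U\to V$ in $\mathcal T$, $\mathrm{Res}^V_U$ is pullback and $\mathrm{Ind}^V_U$ postcomposition. A full $\mathcal T$-subcategory $\mathcal C$ assigns isomorphism-closed classes $\mathcal C_V\subseteq\mathrm{Ob}\,\mathbb F_V$ stable under all restrictions. For $S\in\mathbb F_V$ with orbits $U\in\mathrm{Orb}(S)$ and $T_U\in\mathbb F_U$, $\coprod_U^ST_U:=\coprod_U\mathrm{Ind}_U^VT_U$. A $\mathcal T$-weak indexing system is a full $\mathcal T$-subcategory $\mathcal C$ with $\mathcal C_V\neq\emptyset\Rightarrow *_V\in\mathcal C_V$ and closed under $\coprod^S_U T_U$ for $S\in\mathcal C_V$, $T_U\in\mathcal C_U$. It is almost essentially unital if whenever $S\sqcup S'\in\mathcal C_V$ is not isomorphic to $*_V$, we have $S,S'\in\mathcal C_V$. $\upsilon(\mathcal C)=\{V\mid\emptyset_V\in\mathcal C_V\}$. *)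

From mathcomp Require Import all_boot.
Set Implicit Arguments.
Unset Strict Implicit.
Unset Printing Implicit Defensive.

Record Cat := {
  Ob :> Type;
  Hom : Ob -> Ob -> Type;
  cid : forall a, Hom a a;
  ccomp : forall a b c, Hom b c -> Hom a b -> Hom a c;
  ccomp_id_l : forall a b (f : Hom a b), ccomp (cid b) f = f;
  ccomp_id_r : forall a b (f : Hom a b), ccomp f (cid a) = f;
  ccomp_assoc : forall a b x d (h : Hom x d) (g : Hom b x) (f : Hom a b),
      ccomp h (ccomp g f) = ccomp (ccomp h g) f }.
Arguments Hom {_} _ _.
Arguments cid {_} _.
Arguments ccomp {_ _ _ _} _ _.

Section FT.
Variable T : Cat.

(** * The category F_T of finite coproducts of representables.
    An object  coprod_{i in I} y(U_i)  (I a finite type) is recorded by the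
    family (U_i)_i.  By the Yoneda lemma (and since representables are
    connected), a map  coprod_i y(U_i) -> coprod_j y(W_j)  of presheaves is
    exactly a choice, for each i, of an index j and a map U_i -> W_j in T. *)
Record FObj := { idx : finType; orb : idx -> Ob T }.
Arguments orb : clear implicits.

Definition FHom (X Y : FObj) : Type :=
  forall i : idx X, {j : idx Y & Hom (orb X i) (orb Y j)}.

Definition fid (X : FObj) : FHom X X := fun i => existT _ i (cid (orb X i)).

Arguments fid : clear implicits.
Definition fcomp (X Y Z : FObj) (g : FHom Y Z) (f : FHom X Y) : FHom X Z :=
  fun i => let (j, a) := f i in let (k, b) := g j in existT _ k (ccomp b a).

Definition yo (U : Ob T) : FObj := {| idx := Finite.clone unit _; orb := fun _ => U |}.
Definition yoHom (U V : Ob T) (h : Hom U V) : FHom (yo U) (yo V) :=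
  fun _ => existT _ tt h.

Definition IsPullback (A B C P : FObj) (f : FHom A C) (g : FHom B C)
  (p1 : FHom P A) (p2 : FHom P B) : Prop :=
  fcomp f p1 = fcomp g p2 /\
  forall (Q : FObj) (q1 : FHom Q A) (q2 : FHom Q B),
    fcomp f q1 = fcomp g q2 ->
    exists u : FHom Q P,
      (fcomp p1 u = q1 /\ fcomp p2 u = q2) /\
      forall u' : FHom Q P, fcomp p1 u' = q1 -> fcomp p2 u' = q2 -> u' = u.

Definition orbital : Prop :=
  forall (A B C : FObj) (f : FHom A C) (g : FHom B C),
    exists (P : FObj) (p1 : FHom P A) (p2 : FHom P B), IsPullback f g p1 p2.

Record SliceObj (V : Ob T) := { carrier : FObj; str : FHom carrier (yo V) }.
Arguments carrier {V}.
Arguments str {V}.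

Definition slice_iso (V : Ob T) (S S' : SliceObj V) : Prop :=
  exists (f : FHom (carrier S) (carrier S')) (g : FHom (carrier S') (carrier S)),
    [/\ fcomp g f = fid (carrier S), fcomp f g = fid (carrier S') & fcomp (str S') f = str S].

Definition star (V : Ob T) : SliceObj V := {| carrier := yo V; str := fid (yo V) |}.

Definition emptyF : FObj := {| idx := Finite.clone void _; orb := fun v => match v with end |}.
Definition empty (V : Ob T) : SliceObj V :=
  {| carrier := emptyF; str := fun v : idx emptyF => match v with end |}.

Definition sumF (X Y : FObj) : FObj :=
  {| idx := Finite.clone (idx X + idx Y)%type _;
     orb := fun s => match s with inl i => orb X i | inr j => orb Y j end |}.
Definition scoprod (V : Ob T) (S S' : SliceObj V) : SliceObj V :=
  {| carrier := sumF (carrier S) (carrier S');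
     str := fun s => match s as s0 return {j : idx (yo V) & Hom (orb (sumF _ _) s0) (orb (yo V) j)} with
                     | inl i => str S i | inr j => str S' j end |}.

Definition Ind (U V : Ob T) (h : Hom U V) (S : SliceObj U) : SliceObj V :=
  {| carrier := carrier S; str := fcomp (yoHom h) (str S) |}.

(** Orbits of S in F_V: the indices i, with orbit U_i = orb (carrier S) i
    and structure map U_i -> V. *)
Definition orbit_map (V : Ob T) (S : SliceObj V) (i : idx (carrier S)) :
  Hom (orb (carrier S) i) V := projT2 (str S i).

Definition icoprodF (V : Ob T) (S : SliceObj V)
  (TU : forall i : idx (carrier S), SliceObj (orb (carrier S) i)) : FObj :=
  {| idx := Finite.clone {i : idx (carrier S) & idx (carrier (TU i))} _;
     orb := fun p => orb (carrier (TU (projT1 p))) (projT2 p) |}.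
Definition icoprod (V : Ob T) (S : SliceObj V)
  (TU : forall i : idx (carrier S), SliceObj (orb (carrier S) i)) : SliceObj V :=
  {| carrier := icoprodF TU;
     str := fun p => str (Ind (orbit_map (projT1 p)) (TU (projT1 p))) (projT2 p) |}.

Definition Tclass := forall V : Ob T, SliceObj V -> Prop.

(** A full T-subcategory: iso-closed classes stable under all restrictions
    (restriction = pullback along y(U) -> y(V); any pullback square). *)
Definition full_Tsubcategory (C : Tclass) : Prop :=
  (forall V (S S' : SliceObj V), C V S -> slice_iso S S' -> C V S') /\
  (forall (U V : Ob T) (h : Hom U V) (S : SliceObj V) (P : FObj)
          (p1 : FHom P (carrier S)) (p2 : FHom P (yo U)),
      IsPullback (str S) (yoHom h) p1 p2 -> C V S -> C U {| carrier := P; str := p2 |}).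

Definition weak_indexing_system (C : Tclass) : Prop :=
  [/\ full_Tsubcategory C,
      (forall V (S : SliceObj V), C V S -> C V (star V)) &
      (forall V (S : SliceObj V)
              (TU : forall i : idx (carrier S), SliceObj (orb (carrier S) i)),
          C V S -> (forall i, C _ (TU i)) -> C V (icoprod TU))].

Definition almost_essentially_unital (C : Tclass) : Prop :=
  forall V (S S' : SliceObj V),
    C V (scoprod S S') -> ~ slice_iso (scoprod S S') (star V) -> C V S /\ C V S'.

Definition upsilon (C : Tclass) (V : Ob T) : Prop := C V (empty V).

End FT.

From mathcomp Require Import all_boot.
From Stdlib Require Import FunctionalExtensionality.

(** If [S ⊔ S'] is in [C_V] and [∅_V] is too, then [∅_U] lies in [C_U] for
    every orbit [U] of [S ⊔ S'] (the restriction of [∅_V] is [∅_U]), hence so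
    does [*_U]; inducing [*_U] over the orbits of [S] and [∅_U] over those of
    [S'] recovers [S], so [S ∈ C_V].  Conversely [S ≅ S ⊔ ∅_V], so almost
    essential unitality splits off [∅_V] from any non-terminal [S ∈ C_V]. *)

Section SliceIsomorphisms.
Context {T : Cat}.

Lemma fcomp_assoc {A B C D : FObj T} (h : FHom C D) (g : FHom B C) (f : FHom A B) :
  fcomp h (fcomp g f) = fcomp (fcomp h g) f.
Proof.
apply: functional_extensionality_dep => i; rewrite /fcomp.
case: (f i) => j a; case: (g j) => k b; case: (h k) => l c.
by rewrite ccomp_assoc.
Qed.

Lemma fcomp_id_l {A B : FObj T} (f : FHom A B) : fcomp (@fid T B) f = f.
Proof.
apply: functional_extensionality_dep => i; rewrite /fcomp /fid.
by case: (f i) => j a; rewrite ccomp_id_l.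
Qed.

Lemma slice_iso_trans {V : Ob T} {S1 S2 S3 : SliceObj V} :
  slice_iso S1 S2 -> slice_iso S2 S3 -> slice_iso S1 S3.
Proof.
move=> [f [g [gf fg sf]]] [f' [g' [gf' fg' sf']]].
exists (fcomp f' f), (fcomp g g'); split.
- by rewrite -fcomp_assoc (fcomp_assoc g' f' f) gf' fcomp_id_l.
- by rewrite -fcomp_assoc (fcomp_assoc f g g') fg fcomp_id_l.
- by rewrite fcomp_assoc sf'.
Qed.

Lemma slice_iso_scoprod_empty {V : Ob T} (S : SliceObj V) :
  slice_iso S (scoprod S (empty V)).
Proof.
pose f : FHom (carrier S) (carrier (scoprod S (empty V))) :=
  fun a => existT _ (inl a) (cid _).
pose g : FHom (carrier (scoprod S (empty V))) (carrier S) := fun p =>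
  match p as p0 return {j : idx (carrier S) &
      Hom (orb (f:=carrier (scoprod S (empty V))) p0) (orb j)} with
  | inl a => existT _ a (cid _)
  | inr v => match v with end
  end.
exists f, g; split; apply: functional_extensionality_dep.
- by move=> a; rewrite /fcomp /fid /= ccomp_id_l.
- by case=> [a|[]]; rewrite /fcomp /fid /= ccomp_id_l.
- by move=> a; rewrite /fcomp /=; case: (str a) => k b; rewrite ccomp_id_r.
Qed.

Lemma slice_iso_scoprodC {V : Ob T} (S S' : SliceObj V) :
  slice_iso (scoprod S S') (scoprod S' S).
Proof.
pose swap (X Y : SliceObj V) : FHom (carrier (scoprod X Y)) (carrier (scoprod Y X)) :=
  fun p => match p as p0 return {j : idx (carrier (scoprod Y X)) &
      Hom (orb (f:=carrier (scoprod X Y)) p0) (orb j)} with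
  | inl a => existT _ (inr a) (cid _)
  | inr b => existT _ (inl b) (cid _)
  end.
exists (swap S S'), (swap S' S); split; apply: functional_extensionality_dep.
- by case=> [a|b]; rewrite /fcomp /fid /= ccomp_id_l.
- by case=> [a|b]; rewrite /fcomp /fid /= ccomp_id_l.
- case=> [a|b]; rewrite /fcomp /=.
  + by case: (str a) => k c; rewrite ccomp_id_r.
  + by case: (str b) => k c; rewrite ccomp_id_r.
Qed.

Definition left_selector {V : Ob T} {S S' : SliceObj V}
    (i : idx (carrier (scoprod S S'))) : SliceObj (orb i) :=
  match i with
  | inl a => star (orb a)
  | inr b => empty (orb b)
  end.

Lemma slice_iso_icoprod_left_selector {V : Ob T} (S S' : SliceObj V) :
  slice_iso (icoprod (@left_selector V S S')) S.
Proof.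
pose f : FHom (carrier (icoprod (@left_selector V S S'))) (carrier S) := fun p =>
  match p as p0 return {j : idx (carrier S) &
      Hom (orb (f:=carrier (icoprod (@left_selector V S S'))) p0) (orb j)} with
  | existT (inl a) _ => existT _ a (cid _)
  | existT (inr _) x => match x with end
  end.
pose g : FHom (carrier S) (carrier (icoprod (@left_selector V S S'))) := fun a =>
  existT _ (existT (fun i => idx (carrier (left_selector i))) (inl a) tt) (cid _).
exists f, g; split; apply: functional_extensionality_dep.
- by case=> -[a|b] [] /=; rewrite /fcomp /fid /= ccomp_id_l.
- by move=> a; rewrite /fcomp /fid /= ccomp_id_l.
- case=> -[a|b] [] /=; rewrite /fcomp /orbit_map /=.
  by case: (str a) => -[] c; rewrite /fcomp /fid /yoHom /= ccomp_id_r.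
Qed.

End SliceIsomorphisms.

Section Upsilon.
Context {T : Cat}.

Definition fhom0 (X : FObj T) : FHom (emptyF T) X := fun v => match v with end.

Lemma IsPullback_empty {B D : FObj T} (f : FHom (emptyF T) D) (g : FHom B D) :
  IsPullback f g (fhom0 (emptyF T)) (fhom0 B).
Proof.
split; first by apply: functional_extensionality_dep => -[].
move=> Q q1 q2 _; exists (fun i => match projT1 (q1 i) with end).
by split; [split|move=> u _ _]; apply: functional_extensionality_dep => i;
  case: (projT1 (q1 i)).
Qed.

Context {C : Tclass T}.

Lemma upsilon_restr {U V : Ob T} (h : Hom U V) :
  full_Tsubcategory C -> upsilon C V -> upsilon C U.
Proof.
case=> _ C_restr emptyV.
exact: (C_restr _ _ h (empty V) _ _ _ (IsPullback_empty _ (yoHom h)) emptyV).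
Qed.

Hypothesis C_wis : weak_indexing_system C.

Lemma scoprod_l_mem {V : Ob T} {S S' : SliceObj V} :
  upsilon C V -> C V (scoprod S S') -> C V S.
Proof.
case: C_wis => C_full C_star C_icoprod emptyV SS'; have [C_iso _] := C_full.
have emptyU U (h : Hom U V) : upsilon C U := upsilon_restr h C_full emptyV.
apply: (C_iso _ _ _ _ (slice_iso_icoprod_left_selector S S')).
apply: (C_icoprod _ _ _ SS') => -[a|b] /=.
- exact: (C_star _ _ (emptyU _ (orbit_map a))).
- exact: (emptyU _ (orbit_map b)).
Qed.

Lemma scoprod_r_mem {V : Ob T} {S S' : SliceObj V} :
  upsilon C V -> C V (scoprod S S') -> C V S'.
Proof.
move=> emptyV SS'; case: C_wis => -[C_iso _] _ _.
exact: (scoprod_l_mem emptyV (C_iso _ _ _ SS' (slice_iso_scoprodC S S'))).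
Qed.

End Upsilon.

Theorem mainTheorem7 (T : Cat) (C : Tclass T) :
  orbital T -> weak_indexing_system C ->
  (almost_essentially_unital C <->
   forall (V : Ob T) (S : SliceObj V), C V S -> ~ slice_iso S (star V) -> upsilon C V).
Proof.
move=> _ C_wis; have [[C_iso _] _ _] := C_wis; split.
- move=> C_aeu V S CS S_nonterminal.
  have S_empty := slice_iso_scoprod_empty S.
  apply: (proj2 (C_aeu V S (empty V) (C_iso _ _ _ CS S_empty) _)).
  by move=> /(slice_iso_trans S_empty).
- move=> C_upsilon V S S' SS' SS'_nonterminal.
  have emptyV := C_upsilon V _ SS' SS'_nonterminal.
  exact: (conj (scoprod_l_mem C_wis emptyV SS') (scoprod_r_mem C_wis emptyV SS')).
Qed.
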